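(* Let $\mathcal{M}=\langle S,\to,L\rangle$ be a labeled transition system and let $B\subseteq S\times S$. Then $B$ is a well-founded skipping relation (WFSK) on $\mathcal{M}$ if and only if $B$ is a reduced well-founded skipping relation (RWFSK) on $\mathcal{M}$.
   Context: A labeled transition system is $\mathcal{M}=\langle S,\to,L\rangle$ where $S$ is a non-empty (possibly infinite, of arbitrary cardinality) set of states, $\to\subseteq S\times S$ is left-total (every state has a successor), and $L$ is a function with domain $S$ (the labeling). For $k\ge 1$, $w\to^{k} v$ means there is a path $w=v_0\to v_1\to\cdots\to v_k=v$; $w\to^{+}v$ means $w\to^k v$ for some finite $k\ge 1$, and $w\to^{\ge 2}v$ means $w\to^k v$ for some finite $k\ge 2$. $B$ is a WFSK on $\mathcal{M}$ iff (WFSK1) for all $s,w\in S$ with $sBw$, $L(s)=L(w)$; and (WFSK2) there exist a well-founded set $\langle W,\prec\rangle$ and functions $\mathit{rankt}:S\times S\to W$ and $\mathit{rankl}:S\times S\times S\to\omega$ such that for all $s,u,w\in S$ with $s\to u$ and $sBw$, at least one of the following holds: (a) there is $v$ with $w\to v$ and $uBv$; (b) $uBw$ and $\mathit{rankt}(u,w)\prec\mathit{rankt}(s,w)$; (c) there is $v$ with $w\to v$, $sBv$ and $\mathit{rankl}(v,s,u)<\mathit{rankl}(w,s,u)$; (d) there is $v$ with $w\to^{\ge 2}v$ and $uBv$. $B$ is an RWFSK on $\mathcal{M}$ iff (RWFSK1) for all $s,w\in S$ with $sBw$, $L(s)=L(w)$; and (RWFSK2) there exist a well-founded set $\langle W,\prec\rangle$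 and a function $\mathit{rankt}:S\times S\to W$ such that for all $s,u,w\in S$ with $s\to u$ and $sBw$, either (a) $uBw$ and $\mathit{rankt}(u,w)\prec\mathit{rankt}(s,w)$, or (b) there is $v$ with $w\to^{+}v$ and $uBv$. *)

From Stdlib Require Import Arith Wellfounded Relations.

Record LTS (S Lab : Type) : Type := mkLTS {
  trans : S -> S -> Prop;
  label : S -> Lab
}.
Arguments trans {S Lab} _ _ _.
Arguments label {S Lab} _ _.

Definition is_LTS {S Lab : Type} (M : LTS S Lab) : Prop :=
  inhabited S /\ (forall s : S, exists u : S, trans M s u).

Fixpoint steps {St : Type} (R : St -> St -> Prop) (k : nat) (w v : St) : Prop :=
  match k with
  | O => w = v
  | Datatypes.S k' => exists x, R w x /\ steps R k' x v
  end.

Definition plus_steps {S : Type} (R : S -> S -> Prop) (w v : S) : Prop :=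
  exists k, 1 <= k /\ steps R k w v.

Definition ge2_steps {S : Type} (R : S -> S -> Prop) (w v : S) : Prop :=
  exists k, 2 <= k /\ steps R k w v.

Definition WFSK {S Lab : Type} (M : LTS S Lab) (B : S -> S -> Prop) : Prop :=
  (forall s w, B s w -> label M s = label M w) /\
  exists (W : Type) (prec : W -> W -> Prop) (rankt : S -> S -> W)
         (rankl : S -> S -> S -> nat),
    well_founded prec /\
    forall s u w, trans M s u -> B s w ->
      (exists v, trans M w v /\ B u v) \/
      (B u w /\ prec (rankt u w) (rankt s w)) \/
      (exists v, trans M w v /\ B s v /\ rankl v s u < rankl w s u) \/
      (exists v, ge2_steps (trans M) w v /\ B u v).

Definition RWFSK {S Lab : Type} (M : LTS S Lab) (B : S -> S -> Prop) : Prop :=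
  (forall s w, B s w -> label M s = label M w) /\
  exists (W : Type) (prec : W -> W -> Prop) (rankt : S -> S -> W),
    well_founded prec /\
    forall s u w, trans M s u -> B s w ->
      (B u w /\ prec (rankt u w) (rankt s w)) \/
      (exists v, plus_steps (trans M) w v /\ B u v).

From Stdlib Require Import Arith Lia Wellfounded.

(* The local ranks of WFSK only serve to bound a chain of stuttering matches
   [w -> v1 -> v2 -> ...] along which [B s] keeps holding; since [rankl] strictly
   decreases along it the chain is finite and must end with a transition to a
   match of [u], which is a [->^+] path.  Conversely a [->^+] path either is a
   single step (case (a)) or has length at least two (case (d)). *)

Section Paths.

Variables (St : Type) (R : St -> St -> Prop).

Lemma plus_steps_step w v : R w v -> plus_steps R w v.
Proof. intros Hwv. exists 1. split; [lia|]. simpl. eauto. Qed.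

Lemma plus_steps_cons w x v : R w x -> plus_steps R x v -> plus_steps R w v.
Proof. intros Hwx [k [Hk Hxv]]. exists (S k). split; [lia|]. simpl. eauto. Qed.

Lemma plus_steps_step_or_ge2 w v :
  plus_steps R w v -> R w v \/ ge2_steps R w v.
Proof.
  intros [[|[|k]] [Hk Hwv]]; [lia| |].
  - left. destruct Hwv as [x [Hwx <-]]. exact Hwx.
  - right. exists (S (S k)). split; [lia | exact Hwv].
Qed.

Lemma ge2_steps_plus_steps w v : ge2_steps R w v -> plus_steps R w v.
Proof. intros [k [Hk Hwv]]. exists k. split; [lia | exact Hwv]. Qed.

End Paths.

Section Clauses.

Variables (St Lab W : Type) (M : LTS St Lab) (B : St -> St -> Prop).
Variables (prec : W -> W -> Prop) (rankt : St -> St -> W).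

Definition wfsk_clause (rankl : St -> St -> St -> nat) (s u w : St) : Prop :=
  (exists v, trans M w v /\ B u v) \/
  (B u w /\ prec (rankt u w) (rankt s w)) \/
  (exists v, trans M w v /\ B s v /\ rankl v s u < rankl w s u) \/
  (exists v, ge2_steps (trans M) w v /\ B u v).

Definition rwfsk_clause (s u w : St) : Prop :=
  (B u w /\ prec (rankt u w) (rankt s w)) \/
  (exists v, plus_steps (trans M) w v /\ B u v).

Lemma rwfsk_clause_of_wfsk rankl s u :
  (forall w, B s w -> wfsk_clause rankl s u w) ->
  forall w, B s w -> rwfsk_clause s u w.
Proof.
  intros Hclause w.
  induction w as [w IH] using
    (well_founded_induction (wf_inverse_image _ nat lt (fun w => rankl w s u) lt_wf)).
  intros Hsw.
  destruct (Hclause w Hsw) as [[v [Hwv Huv]] | [Hdrop | [[v [Hwv [Hsv Hlt]]] | [v [Hwv Huv]]]]].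
  - right. exists v. split; [apply plus_steps_step |]; assumption.
  - left. exact Hdrop.
  - right. destruct (IH v Hlt Hsv) as [[Huv _] | [v' [Hvv' Huv']]].
    + exists v. split; [apply plus_steps_step |]; assumption.
    + exists v'. split; [eapply plus_steps_cons |]; eassumption.
  - right. exists v. split; [apply ge2_steps_plus_steps |]; assumption.
Qed.

Lemma wfsk_clause_of_rwfsk rankl s u w :
  rwfsk_clause s u w -> wfsk_clause rankl s u w.
Proof.
  intros [Hdrop | [v [Hwv Huv]]].
  - right. left. exact Hdrop.
  - destruct (plus_steps_step_or_ge2 _ _ _ _ Hwv) as [Hstep | Hge2].
    + left. eauto.
    + right. right. right. eauto.
Qed.

End Clauses.

Theorem theorem1 (S Lab : Type) (M : LTS S Lab) (B : S -> S -> Prop) :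
  is_LTS M -> (WFSK M B <-> RWFSK M B).
Proof.
  intros _. split.
  - intros [Hlabel [W [prec [rankt [rankl [Hwf Hstep]]]]]].
    split; [exact Hlabel |]. exists W, prec, rankt. split; [exact Hwf |].
    intros s u w Hsu.
    apply (rwfsk_clause_of_wfsk _ _ _ M B prec rankt rankl).
    intros w' Hsw'. exact (Hstep s u w' Hsu Hsw').
  - intros [Hlabel [W [prec [rankt [Hwf Hstep]]]]].
    split; [exact Hlabel |]. exists W, prec, rankt, (fun _ _ _ => 0).
    split; [exact Hwf |].
    intros s u w Hsu Hsw.
    exact (wfsk_clause_of_rwfsk _ _ _ M B prec rankt _ s u w (Hstep s u w Hsu Hsw)).
Qed.
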